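(* For every $n\ge1$, $$\sum_{e\in\mathbf I_n(021)}s^{\mathrm{dist}(e)}=\sum_{p\in SP_{n-1}}s^{\mathrm{asc}(p)}.$$
   Context: $\mathbf I_n=\{(e_1,\dots,e_n):0\le e_i\le i-1\}$ and $\mathbf I_n(021)$ is the set of those $e$ with no $i<j<k$ such that $e_i<e_k<e_j$. $\mathrm{dist}(e)$ is the number of distinct positive values among the entries of $e$. A Schröder $m$-path is a lattice path from $(0,0)$ to $(2m,0)$ with steps $(1,1)$ (up), $(1,-1)$ (down) and $(2,0)$ (flat) never going below the $x$-axis; $SP_m$ is the set of them ($SP_0$ consists of the empty path). An ascent of a Schröder path is a maximal run of consecutive up steps, and $\mathrm{asc}(p)$ is the number of ascents of $p$. *)

From HB Require Import structures.
From mathcomp Require Import all_boot all_order all_algebra.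
Set Implicit Arguments. Unset Strict Implicit. Unset Printing Implicit Defensive.
Import GRing.Theory.

(* ---------- Inversion sequences ----------
   e = (e_1,...,e_n) with 0 <= e_i <= i-1 is represented (0-indexed) as a
   finite function e : 'I_n -> 'I_n with e i <= i. *)
Definition is_inv (n : nat) (e : {ffun 'I_n -> 'I_n}) : bool :=
  [forall i, (e i <= i)%N].

Definition contains021 (n : nat) (e : {ffun 'I_n -> 'I_n}) : bool :=
  [exists i : 'I_n, exists j : 'I_n, exists k : 'I_n,
    [&& (i < j)%N, (j < k)%N, (e i < e k)%N & (e k < e j)%N]].

Definition avoids021 (n : nat) (e : {ffun 'I_n -> 'I_n}) : bool :=
  is_inv e && ~~ contains021 e.

Definition dist (n : nat) (e : {ffun 'I_n -> 'I_n}) : nat :=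
  #|[set e i | i in [pred i : 'I_n | (0 < e i)%N]]|.

Inductive step := Up | Down | Flat.

Definition step_code (s : step) : 'I_3 :=
  match s with Up => inord 0 | Down => inord 1 | Flat => inord 2 end.
Definition step_decode (i : 'I_3) : step :=
  match val i with 0 => Up | 1 => Down | _ => Flat end.
Lemma step_codeK : cancel step_code step_decode.
Proof. by case; rewrite /step_decode /= inordK. Qed.
HB.instance Definition _ := Finite.copy step (can_type step_codeK).

Fixpoint xlen (w : seq step) : nat :=
  match w with
  | [::] => 0
  | Flat :: w' => (xlen w').+2
  | _ :: w' => (xlen w').+1
  end.

Fixpoint valid_from (h : nat) (w : seq step) : bool :=
  match w with
  | [::] => h == 0
  | Up :: w' => valid_from h.+1 w'
  | Down :: w' => (0 < h) && valid_from h.-1 w'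
  | Flat :: w' => valid_from h w'
  end.

Definition is_schroder (m : nat) (w : seq step) : bool :=
  (xlen w == 2 * m) && valid_from 0 w.

Fixpoint asc_from (prevUp : bool) (w : seq step) : nat :=
  match w with
  | [::] => 0
  | Up :: w' => (~~ prevUp) + asc_from true w'
  | _ :: w' => asc_from false w'
  end.
Definition asc (w : seq step) : nat := asc_from false w.

(* generating polynomial  sum_{p in SP_m} s^asc(p).  A Schroeder m-path has
   at most 2m steps, so it appears exactly once as a k-tuple with k <= 2m. *)
Definition schroder_asc_poly (m : nat) : {poly int} :=
  \sum_(k < (2 * m).+1) \sum_(w : k.-tuple step | is_schroder m w) 'X^(asc w).

Definition inv021_dist_poly (n : nat) : {poly int} :=
  \sum_(e : {ffun 'I_n -> 'I_n} | avoids021 e) 'X^(dist e).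

From mathcomp Require Import all_boot all_order all_algebra.
From mathcomp Require Import zify.
Set Implicit Arguments. Unset Strict Implicit. Unset Printing Implicit Defensive.
Import GRing.Theory.

(* Both polynomials are weight enumerators of the same generating tree.
   A 021-avoiding inversion sequence of length n + 2 arises from one of length
   n + 1 by appending a value v that is either 0 or at least the current maximum
   s, and the number of distinct positive values grows exactly when v > s.
   Cutting a Schroeder path after each down or flat step writes it as a list of
   blocks "some up steps, then a down or a flat step"; a path with n + 1 blocks
   arises from one with n blocks by appending a flat step (v = 0), or by
   appending a down step and inserting an up step into block v, where v is at
   least the position s of the last block containing an up step; the number of
   ascents grows exactly when v > s.  In both trees the statistic s becomes
   max(s, v) and the weight grows by [s < v], so both enumerators satisfy the
   recursion of [level_poly]. *)

(** * Generating trees *)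

Lemma sum_partition_lt (R : nmodType) (I : Type) (r : seq I) (f : I -> nat) (F : I -> R) j :
  (\sum_(i <- r | (f i < j)%N) F i = \sum_(k < j) \sum_(i <- r | f i == k :> nat) F i)%R.
Proof.
rewrite (eq_bigr (fun k : 'I_j => \sum_(i <- r) if f i == k then F i else 0)%R) => [|k _];
  last exact: big_mkcond.
rewrite exchange_big big_mkcond; apply: eq_bigr => i _ /=.
rewrite -big_mkcond (eq_bigl (fun k : 'I_j => k == f i :> nat)) => [|k]; last exact: eq_sym.
by rewrite (big_ord1_eq _ (fun _ => F i)).
Qed.

Definition stat_coef (j : nat) : {poly int} := if j == 0 then 1%R else 2%:R%R.

(* A node with statistic j has children with statistic j for v = 0 and, if
   j > 0, for v = j, and one child with statistic i and one more unit of weight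
   for each i > j. *)
Fixpoint level_poly (m j : nat) : {poly int} :=
  if m is m'.+1 then
    if j <= m then (stat_coef j * level_poly m' j + 'X * \sum_(i < j) level_poly m' i)%R
    else 0%R
  else (j == 0)%:R%R.

Lemma level_poly_gt m j : m < j -> level_poly m j = 0%R.
Proof. by case: m => [|m] /= mj; [case: j mj | rewrite leqNgt mj]. Qed.

Section GeneratingTree.

Variables (A : eqType) (root : A) (graft : A -> nat -> A) (stat weight : A -> nat).

Definition admissible (q : A) (v : nat) : bool := (v == 0) || (stat q <= v).

Definition grafts (n : nat) (q : A) : seq nat :=
  [seq v <- index_iota 0 n.+2 | admissible q v].

Fixpoint level (n : nat) : seq A :=
  if n is n'.+1 then [seq graft q v | q <- level n', v <- grafts n' q] else [:: root].

Lemma levelS n : level n.+1 = [seq graft q v | q <- level n, v <- grafts n q].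
Proof. by []. Qed.

Lemma mem_grafts n q v : (v \in grafts n q) = (v < n.+2) && admissible q v.
Proof. by rewrite mem_filter mem_index_iota andbC. Qed.

Lemma mem_levelS n x :
  x \in level n.+1 <-> exists q v, [/\ q \in level n, v \in grafts n q & x = graft q v].
Proof. by split=> [/allpairsPdep | ?]; last apply/allpairsPdep. Qed.

Lemma level_uniq n :
  (forall m, m < n -> {in level m &, forall q q', {in grafts m q & grafts m q',
     forall v v', graft q v = graft q' v' -> q = q' /\ v = v'}}) ->
  uniq (level n).
Proof.
elim: n => [|n IHn] // graft_inj.
apply: allpairs_uniq_dep => [||[q v] [q' v']].
- by apply: IHn => m mn; apply: graft_inj; apply: ltnW.
- by move=> q _; rewrite filter_uniq ?iota_uniq.
move=> /allpairsPdep [q1 [v1 [qin vin [-> ->]]]] /allpairsPdep [q2 [v2 [qin' vin' [-> ->]]]] /=.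
by case/(graft_inj n (ltnSn n) _ _ qin qin' _ _ vin vin') => -> ->.
Qed.

Hypothesis stat_root : stat root = 0.
Hypothesis weight_root : weight root = 0.
Hypothesis stat_graft : forall n q v, q \in level n -> v \in grafts n q ->
  stat (graft q v) = maxn (stat q) v.
Hypothesis weight_graft : forall n q v, q \in level n -> v \in grafts n q ->
  weight (graft q v) = weight q + (stat q < v).

Lemma stat_level_le n q : q \in level n -> stat q <= n.
Proof.
elim: n q => [|n IHn] q; first by rewrite inE => /eqP ->; rewrite stat_root.
case/mem_levelS => p [v [pn vp ->]]; move: (vp); rewrite mem_grafts ltnS => /andP [vn _].
by rewrite (stat_graft pn vp) geq_max vn andbT (leq_trans (IHn p pn)).
Qed.

Local Open Scope ring_scope.

Lemma sum_grafts_stat n q j : q \in level n ->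
  \sum_(v <- grafts n q | stat (graft q v) == j) 'X^(weight (graft q v))
  = (if stat q == j then stat_coef j * 'X^(weight q) else 0)
    + (if (stat q < j <= n.+1)%N then 'X^((weight q).+1) else 0).
Proof.
move=> qn; set s := stat q; have sn : (s <= n)%N := stat_level_le qn.
have -> : \sum_(v <- grafts n q | stat (graft q v) == j) 'X^(weight (graft q v))
        = \sum_(v <- grafts n q | maxn s v == j) 'X^(weight q + (s < v)%N) :> {poly int}.
  rewrite big_seq_cond [RHS]big_seq_cond.
  apply: eq_big => [v | v /andP [vq _]]; last by rewrite (weight_graft qn).
  by case vq: (v \in grafts n q); rewrite //= (stat_graft qn vq).
rewrite /grafts /admissible -/s big_filter_cond big_ltn_cond //= maxn0 addn0.
rewrite (congr_big_nat _ _ (fun v => (s <= v)%N && (v == j))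
          (fun v => 'X^(weight q + (s < v)%N)) erefl erefl) //; last first.
  by move=> v /andP [v0 _]; apply/idP/idP; lia.
rewrite big_nat1_cond_eq /stat_coef.
case: (ltngtP s j) => [sj | js | <-].
- by rewrite add0r (leq_ltn_trans (leq0n s) sj) andbT addn1 ltnS.
- by rewrite andbF add0r.
rewrite andbT addn0 addr0 ltnS (leq_trans sn) //.
by case: posnP => _ /=; rewrite ?addr0 ?mul1r // mulr_natl mulr2n.
Qed.

Lemma sum_level_stat n j :
  \sum_(q <- level n | stat q == j) 'X^(weight q) = level_poly n j.
Proof.
elim: n j => [|n IHn] j.
  by rewrite big_cons big_nil stat_root weight_root eq_sym /=; case: (j == 0)%N; rewrite ?addr0.
rewrite levelS big_mkcond big_allpairs_dep /=.
under eq_big_seq => q qn do rewrite -big_mkcond (sum_grafts_stat j qn).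
rewrite big_split /= -!big_mkcond /= -mulr_sumr IHn.
case: leqP => jn; last first.
  by rewrite level_poly_gt ?mulr0 ?big1 ?addr0 // => [q|]; rewrite ?andbF // ltnW.
congr (_ + _); rewrite (eq_bigl (fun q => stat q < j)%N) => [|q]; last by rewrite andbT.
rewrite (eq_bigr (fun q => 'X * 'X^(weight q))) => [|q _]; last by rewrite exprS.
by rewrite -mulr_sumr sum_partition_lt; congr (_ * _); apply: eq_bigr => i _.
Qed.

Lemma sum_level n : \sum_(q <- level n) 'X^(weight q) = \sum_(j < n.+1) level_poly n j.
Proof.
under [RHS]eq_bigr => j _ do rewrite -sum_level_stat.
rewrite -sum_partition_lt big_seq_cond [RHS]big_seq_cond; apply: eq_bigl => q.
by case qn: (q \in level n); rewrite //= ltnS stat_level_le.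
Qed.

End GeneratingTree.

(** * 021-avoiding inversion sequences *)

Definition seqmax (s : seq nat) : nat := foldr maxn 0 s.

Lemma seqmax_rcons s v : seqmax (rcons s v) = maxn (seqmax s) v.
Proof. by elim: s => [|x s IHs] /=; rewrite ?max0n ?maxn0 // IHs maxnA. Qed.

Lemma leq_seqmax s x : x \in s -> x <= seqmax s.
Proof.
elim: s => [|y s IHs] //=; rewrite inE leq_max => /orP [/eqP -> | /IHs ->].
  by rewrite leqnn.
by rewrite orbT.
Qed.

Lemma seqmax_mem s : 0 < seqmax s -> seqmax s \in s.
Proof.
elim: s => [|y s IHs] //=; rewrite inE.
by case: (leqP y (seqmax s)) => [_ /IHs -> | _ _]; rewrite ?orbT ?eqxx.
Qed.

Definition dist_seq (s : seq nat) : nat := size (undup [seq x <- s | 0 < x]).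

Lemma size_undup_rcons (T : eqType) (s : seq T) x :
  size (undup (rcons s x)) = size (undup s) + (x \notin s).
Proof.
have /perm_size -> : perm_eq (undup (rcons s x)) (if x \in s then undup s else x :: undup s).
  apply: uniq_perm; rewrite ?undup_uniq //.
    by case: ifP => xs; rewrite /= ?mem_undup ?xs undup_uniq.
  move=> y; rewrite mem_undup mem_rcons inE.
  by case: ifP => xs; rewrite ?inE mem_undup //; case: eqP => // ->.
by case: ifP => _; rewrite ?addn0 ?addn1.
Qed.

Lemma dist_seq_rcons s v :
  dist_seq (rcons s v) = dist_seq s + ((0 < v) && (v \notin s)).
Proof.
rewrite /dist_seq filter_rcons; case: posnP => [_ | v0]; first by rewrite addn0.
by rewrite size_undup_rcons mem_filter v0.
Qed.

Definition inversion_seq (s : seq nat) : Prop :=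
  forall k, k < size s -> nth 0 s k <= k.

Definition has021 (s : seq nat) : Prop :=
  exists i j k, [/\ i < j, j < k, k < size s,
    nth 0 s i < nth 0 s k & nth 0 s k < nth 0 s j].

Lemma nth_rcons_lt (T : Type) (x0 : T) s x i :
  i < size s -> nth x0 (rcons s x) i = nth x0 s i.
Proof. by rewrite nth_rcons => ->. Qed.

Lemma nth_rcons_size (T : Type) (x0 : T) s x : nth x0 (rcons s x) (size s) = x.
Proof. by rewrite nth_rcons ltnn eqxx. Qed.

Lemma inversion_seq_rcons e v :
  inversion_seq (rcons e v) <-> inversion_seq e /\ v <= size e.
Proof.
split=> [inv_ev | [inv_e ve] k].
  split=> [k ke | ]; first by rewrite -(nth_rcons_lt 0 v ke) inv_ev // size_rcons ltnS ltnW.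
  by rewrite -{1}(nth_rcons_size 0 e v) inv_ev // size_rcons.
rewrite size_rcons ltnS leq_eqVlt => /orP [/eqP -> | ke].
  by rewrite nth_rcons_size.
by rewrite nth_rcons_lt // inv_e.
Qed.

Lemma has021_rcons e v : 0 < size e -> nth 0 e 0 = 0 ->
  has021 (rcons e v) <-> has021 e \/ 0 < v < seqmax e.
Proof.
move=> e_gt0 e0; split=> [[i [j [k [ij jk ks hik hkj]]]] | [[i [j [k [ij jk ke hik hkj]]]] | ]].
- have ik := ltn_trans ij jk.
  move: ks ik jk hik hkj; rewrite size_rcons ltnS leq_eqVlt => /orP [/eqP -> | ke] ik jk.
    rewrite nth_rcons_size !nth_rcons_lt // => hiv hvj; right.
    by rewrite (leq_ltn_trans (leq0n _) hiv) (leq_trans hvj) // leq_seqmax ?mem_nth.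
  have ike := ltn_trans ik ke; have jke := ltn_trans jk ke.
  by rewrite !nth_rcons_lt // => hik hkj; left; exists i, j, k.
- have jke := ltn_trans jk ke; have ike := ltn_trans ij jke.
  by exists i, j, k; split; rewrite ?size_rcons ?nth_rcons_lt // ltnW.
move=> /andP [v0 v_max]; set j := index (seqmax e) e.
have max_in : seqmax e \in e by rewrite seqmax_mem // (ltn_trans v0).
have je : j < size e by rewrite index_mem.
have nth_j : nth 0 e j = seqmax e by rewrite nth_index.
have j0 : 0 < j.
  by rewrite lt0n; apply/eqP => j0; move: v_max; rewrite -nth_j j0 e0.
exists 0, j, (size e).
by split; rewrite ?size_rcons ?nth_rcons_size ?nth_rcons_lt ?e0 ?nth_j // (ltn_trans j0 je).
Qed.

Notation inv021_level := (level [:: 0] (@rcons nat) seqmax).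

Lemma mem_inv021_level m s :
  s \in inv021_level m <-> [/\ size s = m.+1, inversion_seq s & ~ has021 s].
Proof.
elim: m s => [|m IHm] s.
  split=> [/[!inE] /eqP -> | [+ inv_s _]].
    split=> // [[|k] //| [i [j [k [ij jk]]]]]; rewrite ltnS leqn0 => /eqP k0.
    by move: jk; rewrite k0.
  by case: s inv_s => [|x [|//]] // /(_ 0 erefl); rewrite /= leqn0 => /eqP ->; rewrite inE.
rewrite mem_levelS; split=> [[e [v [em /[!mem_grafts] /andP [vm adm] ->]]] | ].
  have [se inv_e nh_e] := (IHm e).1 em.
  have e0 : nth 0 e 0 = 0 by apply/eqP; rewrite -leqn0 inv_e // se.
  split; first by rewrite size_rcons se.
    by apply/inversion_seq_rcons; rewrite se.
  rewrite has021_rcons ?se // => -[// | /andP [v0 v_max]].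
  by move: adm; rewrite /admissible; lia.
case/lastP: s => [[] // | e v [+ /inversion_seq_rcons [inv_e ve] nh]]; rewrite size_rcons => -[se].
have e0 : nth 0 e 0 = 0 by apply/eqP; rewrite -leqn0 inv_e // se.
have [nh_e v_adm] : ~ has021 e /\ ~ (0 < v < seqmax e).
  by split=> h; apply: nh; apply/has021_rcons; rewrite ?se //; [left | right].
exists e, v; split => //; first by apply/IHm.
rewrite mem_grafts ltnS -se ve /admissible.
by apply/negPn/negP; rewrite negb_or -lt0n -ltnNge => /andP h; apply: v_adm; apply/andP.
Qed.

Lemma dist_seq_graft q v : admissible seqmax q v ->
  dist_seq (rcons q v) = dist_seq q + (seqmax q < v).
Proof.
rewrite dist_seq_rcons /admissible; case: posnP => [-> | v0] //= max_v.
case: ltngtP max_v => // [max_lt_v | max_eq] _.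
  have -> // : v \in q = false by apply/negP => /leq_seqmax; rewrite leqNgt max_lt_v.
by rewrite -max_eq seqmax_mem // max_eq.
Qed.

Lemma sum_inv021_level m :
  (\sum_(s <- inv021_level m) 'X^(dist_seq s) = \sum_(j < m.+1) level_poly m j)%R.
Proof.
apply: sum_level => // n q v _; first by rewrite seqmax_rcons.
by rewrite mem_grafts => /andP [_ /dist_seq_graft].
Qed.

Definition fseq n (e : {ffun 'I_n -> 'I_n}) : seq nat := [seq (e i : nat) | i <- enum 'I_n].

Lemma size_fseq n (e : {ffun 'I_n -> 'I_n}) : size (fseq e) = n.
Proof. by rewrite size_map size_enum_ord. Qed.

Lemma nth_fseq n (e : {ffun 'I_n -> 'I_n}) (i : 'I_n) : nth 0 (fseq e) i = e i.
Proof. by rewrite (nth_map i) ?size_enum_ord // nth_ord_enum. Qed.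

Lemma fseq_inj n : injective (@fseq n).
Proof. by move=> e e' ee'; apply/ffunP => i; apply/val_inj; rewrite /= -!nth_fseq ee'. Qed.

Lemma dist_fseq n (e : {ffun 'I_n -> 'I_n}) : dist e = dist_seq (fseq e).
Proof.
rewrite /dist /dist_seq cardE -(size_map val); apply/perm_size/uniq_perm.
- by rewrite map_inj_uniq ?enum_uniq //; apply: val_inj.
- exact: undup_uniq.
move=> x; rewrite mem_undup mem_filter; apply/mapP/andP => [[y] | [x0 /mapP [i _ xi]]].
  by rewrite mem_enum => /imsetP [i /[!inE] i0 ->] ->; split => //; apply: map_f; rewrite mem_enum.
by subst x; exists (e i) => //; rewrite mem_enum; apply/imsetP; exists i; rewrite ?inE.
Qed.

Lemma avoids021_fseq n (e : {ffun 'I_n -> 'I_n}) :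
  avoids021 e <-> inversion_seq (fseq e) /\ ~ has021 (fseq e).
Proof.
rewrite /avoids021 /is_inv /contains021; split=> [/andP [/forallP inv_e /existsPn nh] | [inv_e nh]].
  split=> [k | [i [j [k [ij jk]]]]]; rewrite size_fseq => kn.
    by rewrite (nth_fseq e (Ordinal kn)).
  have jn := ltn_trans jk kn; have in_ := ltn_trans ij jn.
  rewrite (nth_fseq e (Ordinal in_)) (nth_fseq e (Ordinal jn)) (nth_fseq e (Ordinal kn)) => hik hkj.
  have /existsPn/(_ (Ordinal jn))/existsPn/(_ (Ordinal kn))/negP[] := nh (Ordinal in_).
  by apply/and4P.
apply/andP; split; first by apply/forallP => i; rewrite -nth_fseq inv_e ?size_fseq.
apply/negP => /existsP [i /existsP [j /existsP [k /and4P [ij jk hik hkj]]]].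
by apply: nh; exists i, j, k; rewrite size_fseq !nth_fseq.
Qed.

Lemma inv021_dist_poly_level m :
  inv021_dist_poly m.+1 = (\sum_(s <- inv021_level m) 'X^(dist_seq s))%R.
Proof.
rewrite /inv021_dist_poly -big_filter.
under eq_bigr => e _ do rewrite dist_fseq.
rewrite -(big_map (@fseq m.+1) xpredT (fun s => 'X^(dist_seq s))%R).
apply/perm_big/uniq_perm.
- by rewrite map_inj_uniq ?filter_uniq ?index_enum_uniq //; apply: fseq_inj.
- by apply: level_uniq => n _ q q' _ _ v v' _ _ /rcons_inj [-> ->].
move=> s; apply/mapP/idP => [[e /[!mem_filter] /andP [/avoids021_fseq [inv_e nh] _] ->] | ].
  by apply/mem_inv021_level; rewrite size_fseq.
case/mem_inv021_level => s_size inv_s nh.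
pose e : {ffun 'I_m.+1 -> 'I_m.+1} := [ffun i : 'I_m.+1 => inord (nth 0 s i)].
have es : fseq e = s.
  apply: (@eq_from_nth _ 0); rewrite size_fseq // => k km.
  rewrite (nth_fseq e (Ordinal km)) ffunE inordK // ltnS.
  by rewrite (leq_trans (inv_s k _)) ?s_size // -ltnS.
exists e => //; rewrite mem_filter mem_index_enum andbT.
by apply/avoids021_fseq; rewrite es.
Qed.

(** * Schroeder paths as lists of blocks *)

(* [(a, b)] stands for a up steps followed by a down step (b = true) or a flat
   step (b = false). *)
Notation block := (nat * bool)%type.

Fixpoint add_up (i : nat) (u : seq block) : seq block :=
  match u, i with
  | [::], _ => [::]
  | x :: u', 0 => (x.1.+1, x.2) :: u'
  | x :: u', i'.+1 => x :: add_up i' u'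
  end.

(* The 1-based position of the last block with an up step, 0 if there is none. *)
Fixpoint last_ascent (u : seq block) : nat :=
  if u is x :: u' then
    if last_ascent u' is k.+1 then k.+2 else (0 < x.1 : nat)
  else 0.

Definition ascents (u : seq block) : nat := count (fun x : block => 0 < x.1) u.

Definition extend (u : seq block) (v : nat) : seq block :=
  if v == 0 then rcons u (0, false) else add_up v.-1 (rcons u (0, true)).

Notation schroder_level := (level [::] extend last_ascent).

Lemma size_add_up i u : size (add_up i u) = size u.
Proof. by elim: u i => [|x u IHu] [|i] //=; rewrite IHu. Qed.

Lemma size_extend u v : size (extend u v) = (size u).+1.
Proof. by rewrite /extend; case: ifP; rewrite ?size_add_up size_rcons. Qed.

Lemma size_schroder_level m u : u \in schroder_level m -> size u = m.
Proof.
elim: m u => [|m IHm] u; first by rewrite inE => /eqP ->.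
by case/mem_levelS => q [v [qm _ ->]]; rewrite size_extend IHm.
Qed.

Lemma last_ascent_rcons0 u b : last_ascent (rcons u (0, b)) = last_ascent u.
Proof. by elim: u => [|x u IHu] //=; rewrite IHu. Qed.

Lemma last_ascent_le_size u : last_ascent u <= size u.
Proof. by elim: u => [|x u IHu] //=; case: (last_ascent u) IHu => [|k]; [case: (0 < x.1)|]. Qed.

Lemma last_ascent_add_up i u : i < size u -> last_ascent (add_up i u) = maxn (last_ascent u) i.+1.
Proof.
elim: u i => [|x u IHu] [|i] //= iu.
  by case: (last_ascent u) => [|k] /=; [case: (0 < x.1) | rewrite maxnC /maxn].
by rewrite IHu //; case: (last_ascent u) => [|k] /=; [case: (0 < x.1); lia | rewrite !maxnSS].
Qed.

Lemma ascents_rcons0 u b : ascents (rcons u (0, b)) = ascents u.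
Proof. by rewrite /ascents -cats1 count_cat addn0. Qed.

Lemma ascents_add_up i u : i < size u ->
  ascents (add_up i u) = ascents u + ((nth (0, false) u i).1 == 0).
Proof.
rewrite /ascents; elim: u i => [|x u IHu] [|i] //= iu; last by rewrite IHu // addnA.
by case: x => [[|a] b]; rewrite /= ?addn0 ?add0n // addnC.
Qed.

Lemma nth_gt0_last_ascent u i : i < size u -> last_ascent u <= i.+1 ->
  (0 < (nth (0, false) u i).1) = (last_ascent u == i.+1).
Proof.
elim: u i => [|x u IHu] [|i] //=; first by case: (last_ascent u) => [|k] /=; case: (0 < x.1).
move=> iu; case E: (last_ascent u) => [|k] /= ui; last by rewrite IHu // E.
by rewrite IHu ?E //; case: (0 < x.1).
Qed.

Section ExtendStatistics.

Variables (n : nat) (q : seq block) (v : nat).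
Hypotheses (qn : q \in schroder_level n) (vq : v \in grafts last_ascent n q).

Let v_range : v.-1 < size (rcons q (0, true)).
Proof.
by move: vq; rewrite mem_grafts size_rcons (size_schroder_level qn) => /andP [+ _]; case: v.
Qed.

Lemma last_ascent_extend : last_ascent (extend q v) = maxn (last_ascent q) v.
Proof.
rewrite /extend; case: posnP => [-> | v0]; first by rewrite last_ascent_rcons0 maxn0.
by rewrite last_ascent_add_up // last_ascent_rcons0 prednK.
Qed.

Lemma ascents_extend : ascents (extend q v) = ascents q + (last_ascent q < v).
Proof.
rewrite /extend; case: posnP => [-> | v0]; first by rewrite ascents_rcons0 addn0.
rewrite ascents_add_up // ascents_rcons0; congr (_ + _).
move: vq; rewrite mem_grafts /admissible gtn_eqF //= => /andP [_ la_v].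
have := nth_gt0_last_ascent v_range; rewrite last_ascent_rcons0 prednK // => /(_ la_v) pos.
by rewrite eqn0Ngt pos ltn_neqAle la_v andbT.
Qed.

End ExtendStatistics.

Lemma sum_schroder_level m :
  (\sum_(u <- schroder_level m) 'X^(ascents u) = \sum_(j < m.+1) level_poly m j)%R.
Proof. by apply: sum_level => // n q v; [apply: last_ascent_extend | apply: ascents_extend]. Qed.

Lemma add_up_inj i : injective (add_up i).
Proof.
elim: i => [|i IHi] [|[a b] u] [|[a' b'] u'] //= [].
- by move=> -> -> ->.
- by move=> -> -> /IHi ->.
Qed.

Lemma map_snd_add_up i u : map snd (add_up i u) = map snd u.
Proof. by elim: u i => [|x u IHu] [|i] //=; rewrite IHu. Qed.

Lemma map_snd_extend u v : map snd (extend u v) = rcons (map snd u) (v != 0).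
Proof. by rewrite /extend; case: eqP; rewrite ?map_snd_add_up map_rcons. Qed.

Lemma schroder_level_uniq m : uniq (schroder_level m).
Proof.
apply: level_uniq => n _ q q' qn q'n v v' vq v'q' e.
have := congr1 (map snd) e; rewrite !map_snd_extend => /rcons_inj [_] /negb_inj vv'.
have la_e : maxn (last_ascent q) v = maxn (last_ascent q') v'.
  by rewrite -(last_ascent_extend qn vq) -(last_ascent_extend q'n v'q') e.
have v'v : v' = v.
  case: (eqVneq v 0) vv' => [-> /esym/eqP -> // | v0 vv'].
  move: vq v'q' la_e; rewrite !mem_grafts /admissible -vv' (negbTE v0) /=.
  by move=> /andP [_ lv] /andP [_ lv']; rewrite (maxn_idPr lv) (maxn_idPr lv').
move: e; rewrite v'v /extend; case: eqP => _; last move/add_up_inj.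
all: by move/rcons_inj => [->].
Qed.

Fixpoint valid_blocks (h k : nat) (u : seq block) : bool :=
  match u with
  | [::] => h == k
  | x :: u' => if x.2 then (0 < h + x.1) && valid_blocks (h + x.1).-1 k u'
               else valid_blocks (h + x.1) k u'
  end.

Lemma valid_blocks_rcons h k u x :
  valid_blocks h k (rcons u x) <-> exists2 l, valid_blocks h l u & valid_blocks l k [:: x].
Proof.
elim: u h => [|[a b] u IHu] h /=; first by split=> [vx | [l /eqP -> //]]; exists h.
case: b => /=; last exact: IHu.
split=> [/andP [p /IHu [l vl vx]] | [l /andP [p vl] vx]]; first by exists l; rewrite ?p.
by rewrite p; apply/IHu; exists l.
Qed.

Lemma valid_blocks_rcons_flat h k u : valid_blocks h k u -> valid_blocks h k (rcons u (0, false)).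
Proof. by move=> vu; apply/valid_blocks_rcons; exists k; rewrite //= addn0. Qed.

Lemma valid_blocks_rcons_down h k u : valid_blocks h k u -> valid_blocks h.+1 k (rcons u (0, true)).
Proof.
elim: u h => [|[a b] u IHu] h /=; first by rewrite addn0.
case: b => /=; last by rewrite addSn; apply: IHu.
by case/andP => p /IHu; rewrite prednK // addSn.
Qed.

Lemma valid_blocks_add_up_rcons h k u i : valid_blocks h k u -> i <= size u ->
  valid_blocks h k (add_up i (rcons u (0, true))).
Proof.
elim: u h i => [|[a b] u IHu] h [|i] //=.
- by move=> /eqP ->; rewrite addn1 /= eqxx.
- by case: b => /= [/andP [p] | ] /valid_blocks_rcons_down; rewrite addnS ?prednK.
- by case: b => /= [/andP [-> /IHu] | /IHu]; apply.
Qed.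

Lemma last_ascent0_cons x u : last_ascent (x :: u) = 0 -> last_ascent u = 0 /\ x.1 = 0.
Proof. by rewrite /=; case: (last_ascent u) => [|k] //; case: x => [[|a] b]. Qed.

Lemma valid_blocks_no_ascent_le u h k : last_ascent u = 0 -> valid_blocks h k u -> k <= h.
Proof.
elim: u h => [|x u IHu] h /=; first by move=> _ /eqP ->.
case/last_ascent0_cons => lu ->; rewrite addn0.
by case: x.2 => [/andP [_ /(IHu _ lu)] | /(IHu _ lu)] //; move/leq_trans; apply; apply: leq_pred.
Qed.

Lemma valid_blocks_no_ascent_pred u h k : last_ascent u = 0 ->
  valid_blocks h.+1 k.+1 u -> valid_blocks h k u.
Proof.
elim: u h => [|x u IHu] h //=.
case/last_ascent0_cons => lu ->; rewrite !addn0.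
case: x.2 => /=; last exact: IHu.
by case: h => [/(valid_blocks_no_ascent_le lu) | h /IHu ->].
Qed.

Fixpoint drop_last_up (u : seq block) : seq block :=
  if u is x :: u' then
    if 0 < last_ascent u' then x :: drop_last_up u' else (x.1.-1, x.2) :: u'
  else [::].

Lemma size_drop_last_up u : size (drop_last_up u) = size u.
Proof. by elim: u => [|x u IHu] //=; case: ifP => /=; rewrite ?IHu. Qed.

Lemma add_up_drop_last_up u : 0 < last_ascent u ->
  add_up (last_ascent u).-1 (drop_last_up u) = u.
Proof.
elim: u => [|[a b] u IHu] //=.
by case E: (last_ascent u) => [|k] /=; [case: a | rewrite -{2}IHu E].
Qed.

Lemma last_ascent_drop_last_up u : last_ascent (drop_last_up u) <= last_ascent u.
Proof.
elim: u => [|x u IHu] //=.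
case E: (last_ascent u) => [|k] /=; first by rewrite E; case: x => [[|[|a]] b].
by case: (last_ascent (drop_last_up u)) IHu => [|k']; rewrite ?E //; case: (0 < x.1).
Qed.

Lemma valid_blocks_drop_last_up u h k : 0 < last_ascent u ->
  valid_blocks h k.+1 u -> valid_blocks h k (drop_last_up u).
Proof.
elim: u h => [|[a b] u IHu] h //=.
case E: (last_ascent u) => [|j] /=; last first.
  move=> _; rewrite E in IHu; have {}IHu h' := IHu h' (ltn0Sn j).
  by case: b => /= [/andP [-> /IHu] | /IHu].
case: a => [|a] //= _; rewrite addnS.
case: b => /= [vu | /(valid_blocks_no_ascent_pred E) //].
have := valid_blocks_no_ascent_le E vu.
by case: (h + a) vu => [|l] // vu _; rewrite /= (valid_blocks_no_ascent_pred E).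
Qed.

Lemma add_up_rcons i u x : i < size u -> add_up i (rcons u x) = rcons (add_up i u) x.
Proof. by elim: u i => [|y u IHu] [|i] //= iu; rewrite IHu. Qed.

Lemma add_up_size_rcons u b : add_up (size u) (rcons u (0, b)) = rcons u (1, b).
Proof. by elim: u => [|x u IHu] //=; rewrite IHu. Qed.

Lemma mem_schroder_level m u :
  u \in schroder_level m <-> size u = m /\ valid_blocks 0 0 u.
Proof.
elim: m u => [|m IHm] u.
  by split=> [/[!inE] /eqP -> | [/size0nil ->]]; rewrite ?inE.
rewrite mem_levelS; split=> [[q [v [qm vg ->]]] | ].
  have [sq vq] := (IHm q).1 qm; split; first by rewrite size_extend sq.
  rewrite /extend; case: eqP => [_ | /eqP v0]; first exact: valid_blocks_rcons_flat.
  apply: valid_blocks_add_up_rcons => //; move: vg; rewrite mem_grafts sq.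
  by case: v v0 => // v _ /andP [].
case/lastP: u => [[] // | q [a b]]; rewrite size_rcons => -[[sq] /valid_blocks_rcons [l vq]].
have la_m : last_ascent q <= m by rewrite -sq last_ascent_le_size.
case: b => /=; last first.
  rewrite addn_eq0 => /andP [/eqP l0 /eqP ->]; rewrite l0 in vq.
  by exists q, 0; rewrite mem_grafts; split => //; apply/IHm.
case: a => [|[|a]]; rewrite ?addn0 ?addn1 ?addnS //=.
- case: l vq => [|[|l]] //= vq _.
  have la_pos : 0 < last_ascent q.
    by rewrite lt0n; apply/eqP => la0; have := valid_blocks_no_ascent_le la0 vq.
  exists (drop_last_up q), (last_ascent q); split.
  + by apply/IHm; rewrite size_drop_last_up valid_blocks_drop_last_up.
  + by rewrite mem_grafts ltnS (leq_trans la_m) //= /admissible last_ascent_drop_last_up orbT.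
  + rewrite /extend gtn_eqF // add_up_rcons ?add_up_drop_last_up //.
    by rewrite size_drop_last_up -ltnS prednK // ltnS last_ascent_le_size.
- case: l vq => [|l] //= vq _; exists q, m.+1; split; first by apply/IHm.
  + by rewrite mem_grafts ltnSn /admissible (leq_trans la_m).
  + by rewrite /extend -sq add_up_size_rcons.
Qed.

(** * Schroeder paths as step words *)

Definition path_of_blocks (u : seq block) : seq step :=
  flatten [seq rcons (nseq x.1 Up) (if x.2 then Down else Flat) | x <- u].

(* Trailing up steps, which no Schroeder path has, are dropped. *)
Fixpoint blocks_of_path (w : seq step) : seq block :=
  match w with
  | [::] => [::]
  | Up :: w' => if blocks_of_path w' is x :: u then (x.1.+1, x.2) :: u else [::]
  | Down :: w' => (0, true) :: blocks_of_path w'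
  | Flat :: w' => (0, false) :: blocks_of_path w'
  end.

Lemma path_of_blocks_cons a b u :
  path_of_blocks ((a, b) :: u) = nseq a Up ++ (if b then Down else Flat) :: path_of_blocks u.
Proof. by rewrite /path_of_blocks /= cat_rcons. Qed.

Lemma path_of_blocksK : cancel path_of_blocks blocks_of_path.
Proof.
elim=> [|[a b] u IHu] //; rewrite path_of_blocks_cons.
by elim: a => [|a /= ->]; first by case: b; rewrite /= IHu.
Qed.

Lemma blocks_of_pathK h w : valid_from h w -> path_of_blocks (blocks_of_path w) = w.
Proof.
elim: w h => [|[] w IHw] h //=.
- move=> vw; have := IHw _ vw; case: (blocks_of_path w) => [w0 | [a b] u].
    by rewrite -w0 in vw.
  by rewrite !path_of_blocks_cons /= => ->.
- by move=> /andP [_ /IHw]; rewrite path_of_blocks_cons => ->.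
- by move=> /IHw; rewrite path_of_blocks_cons => ->.
Qed.

Lemma valid_from_nseq_up h a w : valid_from h (nseq a Up ++ w) = valid_from (h + a) w.
Proof. by elim: a h => [|a IHa] h /=; rewrite ?addn0 // IHa addnS. Qed.

Lemma valid_from_path_of_blocks h u : valid_from h (path_of_blocks u) = valid_blocks h 0 u.
Proof.
elim: u h => [|[a b] u IHu] h //=.
by rewrite path_of_blocks_cons valid_from_nseq_up; case: b; rewrite /= IHu.
Qed.

Lemma asc_from_nseq_up p a c w : c != Up ->
  asc_from p (nseq a Up ++ c :: w) = ((0 < a) && ~~ p) + asc_from false w.
Proof.
move=> cU; elim: a p => [|a IHa] p /=; last by rewrite IHa andbF.
by case: c cU => // /eqP.
Qed.

Lemma asc_path_of_blocks u : asc (path_of_blocks u) = ascents u.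
Proof.
rewrite /asc /ascents; elim: u => [|[a b] u IHu] //=.
by rewrite path_of_blocks_cons asc_from_nseq_up ?IHu ?andbT //; case: b; apply/eqP.
Qed.

Lemma xlen_cat w1 w2 : xlen (w1 ++ w2) = xlen w1 + xlen w2.
Proof. by elim: w1 => [|[] w1 IHw] //=; rewrite IHw. Qed.

Lemma xlen_nseq_up a : xlen (nseq a Up) = a.
Proof. by elim: a => [|a IHa] //=; rewrite IHa. Qed.

Lemma xlen_path_of_blocks h k u : valid_blocks h k u ->
  xlen (path_of_blocks u) + h = 2 * size u + k.
Proof.
elim: u h => [|[a b] u IHu] h /=; first by move=> /eqP ->.
rewrite path_of_blocks_cons xlen_cat xlen_nseq_up.
by case: b => /= [/andP [p /IHu] | /IHu]; lia.
Qed.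

Lemma size_le_xlen w : size w <= xlen w.
Proof. by elim: w => [|[] w IHw] //=; lia. Qed.

Lemma is_schroder_path_of_blocks m w :
  (w \in map path_of_blocks (schroder_level m)) = is_schroder m w.
Proof.
apply/mapP/idP => [[u /mem_schroder_level [<- vu] ->] | /andP [/eqP w_len vw]].
  rewrite /is_schroder valid_from_path_of_blocks vu andbT.
  by have := xlen_path_of_blocks vu; rewrite !addn0 => ->.
have wE := blocks_of_pathK vw; exists (blocks_of_path w); last by rewrite wE.
move: w_len vw; rewrite -wE valid_from_path_of_blocks path_of_blocksK => w_len vu.
apply/mem_schroder_level; split => //.
by have := xlen_path_of_blocks vu; rewrite w_len !addn0 => /eqP; rewrite eqn_mul2l => /eqP.
Qed.

Lemma sum_tuples_size_le (T : finType) (R : nmodType) (P : pred (seq T)) (L : seq (seq T))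
    (F : seq T -> R) N :
  uniq L -> L =i P -> {in L, forall w, size w <= N} ->
  (\sum_(k < N.+1) \sum_(t : k.-tuple T | P t) F t = \sum_(w <- L) F w)%R.
Proof.
move=> uL LP L_size.
have sum_size k : (\sum_(t : k.-tuple T | P t) F t = \sum_(w <- L | size w == k) F w)%R.
  rewrite -big_filter -[RHS]big_filter -(big_map val xpredT F).
  apply/perm_big/uniq_perm.
  - by rewrite map_inj_uniq ?filter_uniq ?index_enum_uniq //; apply: val_inj.
  - exact: filter_uniq.
  move=> w; rewrite mem_filter LP.
  apply/mapP/andP => [[t /[!mem_filter] /andP [Pt _] ->] | [/eqP wk Pw]].
    by rewrite size_tuple.
  have wk' : size w == k by rewrite wk.
  by exists (Tuple wk'); rewrite // mem_filter mem_index_enum andbT.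
rewrite (eq_bigr (fun k : 'I_N.+1 => \sum_(w <- L) if size w == k then F w else 0)%R) => [|k _].
  rewrite exchange_big; apply: eq_big_seq => w wL /=.
  rewrite -big_mkcond (eq_bigl (fun k : 'I_N.+1 => k == size w :> nat)) => [|k]; last exact: eq_sym.
  by rewrite (big_ord1_eq _ (fun _ => F w)) ltnS L_size.
by rewrite sum_size big_mkcond.
Qed.

Lemma schroder_asc_poly_level m :
  schroder_asc_poly m = (\sum_(u <- schroder_level m) 'X^(ascents u))%R.
Proof.
rewrite /schroder_asc_poly (@sum_tuples_size_le _ _ (is_schroder m)
  (map path_of_blocks (schroder_level m)) (fun w => 'X^(asc w))%R).
- by rewrite big_map; apply: eq_bigr => u _; rewrite asc_path_of_blocks.
- by rewrite map_inj_uniq ?schroder_level_uniq //; apply: can_inj path_of_blocksK.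
- exact: is_schroder_path_of_blocks.
by move=> w /[!is_schroder_path_of_blocks] /andP [/eqP <- _]; apply: size_le_xlen.
Qed.

Theorem mainTheorem5 (n : nat) (hn : (1 <= n)%N) :
  inv021_dist_poly n = schroder_asc_poly n.-1.
Proof.
case: n hn => [|m] // _.
by rewrite inv021_dist_poly_level sum_inv021_level schroder_asc_poly_level sum_schroder_level.
Qed.
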